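(* Assume (A), i.e. (A1) and (A2) hold for every level $l\in\{0,\dots,L\}$. Then for any $n,L\geq 1$ there exist constants $B_0(n),\dots,B_L(n)<+\infty$ (not depending on $N_0,\dots,N_L$) such that for any $N_0,\dots,N_L\geq 1$, $$ \mathbb{E}\Big[\Big(\widehat{p}^{L,N_{0:L}}(n)-p^{L}(n)\Big)^2\Big] \leq \sum_{l=0}^L \frac{B_l(n)}{N_l}. $$
   Context: Notation: $\mathcal U=\mathbb R^d$, $\mathcal V=\mathcal U\times\mathcal U$, $v=(u_1,u_2)$. For a probability $\mu$ on $\mathcal V$, $\mu_j$ is its $j$-th marginal, and for $\varphi:\mathcal U\to\mathbb R$, $\varphi_j(v)=\varphi(u_j)$, $\mu(\varphi_j)=\int\varphi(u_j)\mu(dv)$. Coupled particle system (one level). Given: potentials $G_p:\mathcal U\to(0,\infty)$, $p\ge0$; a probability $\eta_0$ on $\mathcal V$; Markov kernels $M_n$ from $\mathcal V$ to $\mathcal V$, $n\ge1$, for which there are Markov kernels $M_{n,j}$ on $\mathcal U$ ($j=1,2$) with $\int\varphi(u'_j)M_n(v,dv')=\int\varphi(u_j')M_{n,j}(u_j,du_j')$ for all bounded measurable $\varphi$. The marginal Feynman–Kac quantities are $\gamma_{n,j}(\varphi)=\int \varphi(u_n)\prod_{p=0}^{n-1}G_p(u_p)\,\eta_{0,j}(du_0)\prod_{p=1}^nM_{p,j}(u_{p-1},du_p)$ and $\eta_{n,j}=\gamma_{n,j}/\gamma_{n,j}(1)$. For $\mu$ a probability on $\mathcal V$ set $G_{n,j,\mu}(u)=G_n(u)/\mu_j(G_n)$,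 $\bar G_{n,\mu}(v)=G_{n,1,\mu}(u_1)\wedge G_{n,2,\mu}(u_2)$ and $$\bar\Phi_n(\mu)(dv')=\mu\big(\bar G_{n-1,\mu}M_n(\cdot,dv')\big)+\big(1-\mu(\bar G_{n-1,\mu})\big)\int\!\!\int \frac{(G_{n-1,1,\mu}-\bar G_{n-1,\mu})(v)}{\mu(G_{n-1,1,\mu}-\bar G_{n-1,\mu})}\frac{(G_{n-1,2,\mu}-\bar G_{n-1,\mu})(\tilde v)}{\mu(G_{n-1,2,\mu}-\bar G_{n-1,\mu})}M_n((u_1,\tilde u_2),dv')\mu(dv)\mu(d\tilde v),$$ (second term absent when $\mu(\bar G_{n-1,\mu})=1$; here $G_{n-1,1,\mu}$ is evaluated at $u_1$, $G_{n-1,2,\mu}$ at $\tilde u_2$). With $N$ particles: $v_0^i\stackrel{iid}{\sim}\eta_0$, and for $p\ge1$, conditionally independently $v_p^i\sim\bar\Phi_p(\bar\eta^N_{p-1})$, $i=1,\dots,N$, where $\bar\eta^N_p=\frac1N\sum_i\delta_{v_p^i}$ with $j$-th marginal $\eta^N_{p,j}$. The estimate is $\gamma^N_{n,j}(1)=\prod_{p=0}^{n-1}\eta^N_{p,j}(G_p)$. Multilevel estimator: for each level $l=0,\dots,L$ one runs, independently across levels, such a coupled system with $N_l$ particles and level-specific $(\eta_0^l,M_n^l)$ (fine marginal $j=1$ corresponds to Euler step $2^{-l}$, coarse $j=2$ to step $2^{-(l-1)}$; at level $0$ only the $j=1$ component is used), giving $\gamma^{l,N_l}_{n,j}(1)$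 and targets $\gamma^l_{n,j}(1)$. Set $\widehat p^{L,N_{0:L}}(n)=\sum_{l=0}^L\{\gamma^{l,N_l}_{n,1}(1)-\gamma^{l,N_l}_{n,2}(1)\}$ and $p^L(n)=\sum_{l=0}^L\{\gamma^{l}_{n,1}(1)-\gamma^{l}_{n,2}(1)\}$, with the level-0 second terms equal to $0$. (A1): there exist $c>1$, $C>0$ such that for all $n\ge0$, $x,x'\in\mathcal U$: $c^{-1}<G_n(x)<c$ and $|G_n(x)-G_n(x')|\le C|x-x'|$. (A2): for each $n$ there is $C_n>0$ such that for all $u,u'\in\mathcal U$, $j\in\{1,2\}$ and bounded Lipschitz $\varphi$, $|M_{n,j}(\varphi)(u)-M_{n,j}(\varphi)(u')|\le C_n\sup|\varphi|\,|u-u'|$. $\mathbb E$ denotes expectation w.r.t. the law of all particle systems. *)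

From HB Require Import structures.
From mathcomp Require Import all_boot all_order all_algebra.
From mathcomp Require Import all_classical all_reals all_analysis.
Set Implicit Arguments. Unset Strict Implicit. Unset Printing Implicit Defensive.
Import Order.TTheory GRing.Theory Num.Theory.
Local Open Scope classical_set_scope.
Local Open Scope ring_scope.

(* U = R^d is represented by d.-tuple R (product = Borel sigma-algebra),
   V = U * U with the product sigma-algebra. *)

Definition edist (R : realType) (d : nat) (x y : d.-tuple R) : R :=
  Num.sqrt (\sum_(i < d) (tnth x i - tnth y i) ^+ 2).

Definition emp (T : Type) (R : realType) (s : seq T) (f : T -> R) : R :=
  (\sum_(v <- s) f v) / (size s)%:R.

Definition supnorm (T : Type) (R : realType) (phi : T -> R) : R :=
  sup (range (fun x => `|phi x|)).

Local Open Scope ereal_scope.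

(* Integral of F (nonnegative) against bar Phi_n(mu) where mu = empirical measure
   of the configuration s, Mn = M_n and Gp = G_{n-1}. *)
Definition PhiInt (R : realType) (d : nat)
    (Mn : R.-pker (d.-tuple R * d.-tuple R)%type ~> (d.-tuple R * d.-tuple R)%type)
    (Gp : d.-tuple R -> R) (s : seq (d.-tuple R * d.-tuple R))
    (F : d.-tuple R * d.-tuple R -> \bar R) : \bar R :=
  let N := (size s)%:R in
  let g1 := fun v : d.-tuple R * d.-tuple R => (Gp v.1 / emp s (fun w => Gp w.1))%R in
  let g2 := fun v : d.-tuple R * d.-tuple R => (Gp v.2 / emp s (fun w => Gp w.2))%R in
  let gb := fun v => Num.min (g1 v) (g2 v) in
  let a := emp s gb in
  (\sum_(v <- s) ((gb v / N)%:E * \int[Mn v]_w F w))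
  + (if a == 1%R then 0 else
      ((1 - a)%:E *
       \sum_(v <- s) \sum_(w <- s)
         ((((g1 v - gb v) / (N * emp s (fun x => g1 x - gb x))) *
           ((g2 w - gb w) / (N * emp s (fun x => g2 x - gb x))))%:E
          * \int[Mn (v.1, w.2)]_z F z))).

(* Integration of F against the law of N conditionally i.i.d. draws, each
   drawn from the integration functional I (a probability). *)
Fixpoint intN (T : Type) (R : realType) (N : nat)
    (I : (T -> \bar R) -> \bar R) (F : seq T -> \bar R) : \bar R :=
  match N with
  | 0 => F [::]
  | N'.+1 => I (fun v => intN N' I (fun t => F (v :: t)))
  end.

(* Expectation of F(gamma^N_{n,1}(1), gamma^N_{n,2}(1)) for the coupled particle
   system: at time p with configuration s and accumulated products c1 c2 =
   prod_{q<p} eta^N_{q,j}(G_q), k further transitions to perform. *)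
Fixpoint chain (R : realType) (d : nat) (G : nat -> d.-tuple R -> R)
    (M : nat -> R.-pker (d.-tuple R * d.-tuple R)%type ~> (d.-tuple R * d.-tuple R)%type)
    (N k p : nat) (s : seq (d.-tuple R * d.-tuple R)) (c1 c2 : R)
    (F : R -> R -> \bar R) : \bar R :=
  match k with
  | 0 => F c1 c2
  | k'.+1 =>
      intN N (PhiInt (M p.+1) (G p) s)
        (fun s' => chain G M N k' p.+1 s'
                     (c1 * emp s (fun v => G p v.1))%R
                     (c2 * emp s (fun v => G p v.2))%R F)
  end.

(* Expectation for one level: v_0^i iid eta_0, then the chain up to time n. *)
Definition levelE (R : realType) (d : nat) (G : nat -> d.-tuple R -> R)
    (eta0 : probability (d.-tuple R * d.-tuple R)%type R)
    (M : nat -> R.-pker (d.-tuple R * d.-tuple R)%type ~> (d.-tuple R * d.-tuple R)%type)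
    (N n : nat) (F : R -> R -> \bar R) : \bar R :=
  intN N (fun f => \int[eta0]_v f v) (fun s => chain G M N n 0 s 1%R 1%R F).

(* contribution of level l: gamma_{n,1} - gamma_{n,2}, second term 0 at level 0 *)
Definition ldiff (R : realType) (l : nat) (c1 c2 : R) : R :=
  if l == 0%N then c1 else (c1 - c2)%R.

(* Expectation w.r.t. independent levels 0..m-1 of F(D_0, ..., D_{m-1}) where
   LE l is the expectation functional of level l. *)
Fixpoint levelsE (R : realType) (m : nat)
    (LE : nat -> (R -> R -> \bar R) -> \bar R) (F : (nat -> R) -> \bar R) : \bar R :=
  match m with
  | 0 => F (fun _ => 0%R)
  | m'.+1 => levelsE m' LE (fun D => LE m' (fun c1 c2 =>
               F (fun l => if l == m' then ldiff m' c1 c2 else D l)))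
  end.

Fixpoint hfun (R : realType) (d : nat) (G : nat -> d.-tuple R -> R)
    (K : nat -> R.-pker (d.-tuple R) ~> (d.-tuple R)) (k p : nat) (u : d.-tuple R)
    : \bar R :=
  match k with
  | 0 => 1
  | k'.+1 => (G p u)%:E * \int[K p.+1 u]_u' hfun G K k' p.+1 u'
  end.

(* gamma_{n,j}(1) with eta_{0,j} the j-th marginal of eta0 (proj = fst/snd) *)
Definition gamma1 (R : realType) (d : nat) (G : nat -> d.-tuple R -> R)
    (eta0 : probability (d.-tuple R * d.-tuple R)%type R)
    (proj : d.-tuple R * d.-tuple R -> d.-tuple R)
    (K : nat -> R.-pker (d.-tuple R) ~> (d.-tuple R)) (n : nat) : R :=
  fine (\int[eta0]_v hfun G K n 0 (proj v)).

Local Close Scope ereal_scope.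

Definition A1 (R : realType) (d : nat) (G : nat -> d.-tuple R -> R) : Prop :=
  exists c C : R, 1 < c /\ 0 < C /\
    forall (n : nat) (x x' : d.-tuple R),
      c^-1 < G n x < c /\ `|G n x - G n x'| <= C * edist x x'.

Definition A2 (R : realType) (d : nat)
    (K : nat -> R.-pker (d.-tuple R) ~> (d.-tuple R)) : Prop :=
  forall n : nat, (1 <= n)%N -> exists Cn : R, 0 < Cn /\
    forall (u u' : d.-tuple R) (phi : d.-tuple R -> R),
      measurable_fun setT phi ->
      (exists b : R, forall x, `|phi x| <= b) ->
      (exists Lc : R, forall x y, `|phi x - phi y| <= Lc * edist x y) ->
      `|Rintegral (K n u) setT phi - Rintegral (K n u') setT phi|
        <= Cn * supnorm phi * edist u u'.

(* M_n has marginal kernels M_{n,j} (proj = fst for j=1, snd for j=2) *)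
Definition marginal_kernels (R : realType) (d : nat)
    (M : nat -> R.-pker (d.-tuple R * d.-tuple R)%type ~> (d.-tuple R * d.-tuple R)%type)
    (proj : d.-tuple R * d.-tuple R -> d.-tuple R)
    (K : nat -> R.-pker (d.-tuple R) ~> (d.-tuple R)) : Prop :=
  forall (n : nat), (1 <= n)%N ->
    forall (v : d.-tuple R * d.-tuple R) (phi : d.-tuple R -> R),
      measurable_fun setT phi -> (exists b : R, forall x, `|phi x| <= b) ->
      (\int[M n v]_w (phi (proj w))%:E = \int[K n (proj v)]_u (phi u)%:E)%E.

From Pilot Require Import Defs.
From HB Require Import structures.
From mathcomp Require Import all_boot all_order all_algebra.
From mathcomp Require Import all_classical all_reals all_analysis.
From mathcomp Require Import ring lra measurable_realfun.
Import Order.TTheory GRing.Theory Num.Theory.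
Local Open Scope classical_set_scope.
Local Open Scope ring_scope.

(* For each level, write h_p for the backward functions of the Feynman-Kac
   model, so that gamma_n(1) = eta_0(h_0).  The random quantities
   Z_p = gamma^N_p(1) eta^N_p(h_p), computed simultaneously for both marginals,
   form a martingale: the coupled selection-mutation step bar Phi_p has the
   marginal Feynman-Kac updates as marginals, which makes the conditional mean
   of the next empirical measure reproduce Z_p exactly.  Conditionally on the
   past, the N particles are i.i.d., so each step adds at most sup^2 / N to the
   second moment; since G <= c, h_p <= c^(n-p) and each of the n + 1 steps
   costs at most (2 c^n)^2 / N.  Independence of the levels makes the squared
   errors add up. *)

Set Implicit Arguments. Unset Strict Implicit. Unset Printing Implicit Defensive.

Section BoundedMeasurable.
Context d (X : measurableType d) (R : realType).

Definition bounded_measurable (f : X -> R) :=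
  measurable_fun setT f /\ exists B : R, forall x, `|f x| <= B.

Lemma bounded_measurable_cst r : bounded_measurable (fun _ => r).
Proof. by split => //; exists `|r|. Qed.

Lemma bounded_measurable_scale a f : bounded_measurable f ->
  bounded_measurable (fun x => a * f x).
Proof.
move=> [mf [B hB]]; split; first exact: measurable_funM.
by exists (`|a| * B) => x; rewrite normrM ler_wpM2l.
Qed.

Lemma bounded_measurable_add f g : bounded_measurable f -> bounded_measurable g ->
  bounded_measurable (fun x => f x + g x).
Proof.
move=> [mf [B1 h1]] [mg [B2 h2]]; split; first exact: measurable_funD.
by exists (B1 + B2) => x; apply: le_trans (ler_normD _ _) (lerD _ _).
Qed.

Lemma bounded_measurable_lin f g a b : bounded_measurable f -> bounded_measurable g ->
  bounded_measurable (fun x => a * f x + b * g x).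
Proof.
by move=> bf bg; apply: bounded_measurable_add; exact: bounded_measurable_scale.
Qed.

Lemma bounded_measurable_sqr f :
  bounded_measurable f -> bounded_measurable (fun x => f x ^+ 2).
Proof.
move=> [mf [B hB]]; split; first by apply: measurable_funM.
exists (B * B) => x; rewrite normrX expr2; apply: ler_pM => //.
Qed.

Lemma le_integral_nonneg (mu : {measure set X -> \bar R}) (f g : X -> \bar R) :
  (forall x, 0 <= f x)%E -> (forall x, f x <= g x)%E ->
  (\int[mu]_x f x <= \int[mu]_x g x)%E.
Proof.
move=> f0 fg.
have g0 x : (0 <= g x)%E by apply: le_trans (fg x).
rewrite !ge0_integralTE//.
apply: ereal_sup_le => _ [h /= hf <-]; exists h => //= x.
exact: le_trans (hf x) (fg x).
Qed.

Variable mu : {measure set X -> \bar R}.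
Hypothesis mu1 : mu setT = 1%E.

Lemma bounded_measurable_integrable f :
  bounded_measurable f -> mu.-integrable setT (EFin \o f).
Proof.
move=> [mf [B hB]]; apply: measurable_bounded_integrable => //.
- by rewrite mu1 ltry.
- exists B; split; first by rewrite num_real.
  by move=> M BM x _; apply: le_trans (hB x) (ltW BM).
Qed.

Lemma integral_bounded_measurable f : bounded_measurable f ->
  (\int[mu]_x (f x)%:E = (Rintegral mu setT f)%:E)%E.
Proof.
move=> bf; rewrite /Rintegral fineK//.
exact: (integrable_fin_num measurableT (bounded_measurable_integrable bf)).
Qed.

Lemma Rintegral_const r : Rintegral mu setT (fun _ => r) = r.
Proof. by rewrite Rintegral_cst// mu1 /= mulr1. Qed.

Lemma Rintegral_lin f g a b : bounded_measurable f -> bounded_measurable g ->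
  Rintegral mu setT (fun x => a * f x + b * g x) =
  a * Rintegral mu setT f + b * Rintegral mu setT g.
Proof.
move=> bf bg.
rewrite RintegralD//; try exact/bounded_measurable_integrable/bounded_measurable_scale.
by rewrite !RintegralZl//; exact: bounded_measurable_integrable.
Qed.

Lemma Rintegral_le_bound f B : bounded_measurable f -> (forall x, f x <= B) ->
  Rintegral mu setT f <= B.
Proof.
move=> bf fB; rewrite -subr_ge0 -[X in X - _]Rintegral_const.
have -> : Rintegral mu setT (fun _ => B) - Rintegral mu setT f =
  Rintegral mu setT (fun x => 1 * B + (-1) * f x).
  by rewrite Rintegral_lin ?mul1r ?mulN1r//; exact: bounded_measurable_cst.
by apply: Rintegral_ge0 => x _; have := fB x; lra.
Qed.

End BoundedMeasurable.

Lemma bounded_measurable_comp d d' (X : measurableType d) (Y : measurableType d')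
    (R : realType) (h : Y -> X) (f : X -> R) :
  measurable_fun setT h -> bounded_measurable f -> bounded_measurable (f \o h).
Proof.
move=> mh [mf [B hB]]; split; first exact: measurableT_comp.
by exists B => y; exact: hB.
Qed.

Section IteratedIntegral.
Context (T : Type) (R : realType).

Definition positive_monotone (I : (T -> \bar R) -> \bar R) :=
  (forall F, (forall x, 0 <= F x)%E -> (0 <= I F)%E) /\
  (forall F F', (forall x, 0 <= F x)%E -> (forall x, F x <= F' x)%E -> (I F <= I F')%E).

Variable I : (T -> \bar R) -> \bar R.
Hypothesis hI : positive_monotone I.

Lemma intN_ge0 N F : (forall t, 0 <= F t)%E -> (0 <= intN N I F)%E.
Proof.
have [I0 _] := hI.
by elim: N F => [|N IH] F F0 /=; [exact: F0 | apply: I0 => v; exact: IH].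
Qed.

Lemma intN_le N F F' : (forall t, 0 <= F t)%E ->
  (forall t, size t = N -> F t <= F' t)%E -> (intN N I F <= intN N I F')%E.
Proof.
have [_ Ile] := hI.
elim: N F F' => [|N IH] F F' F0 FF' /=; first exact: FF'.
apply: Ile => v; first exact: intN_ge0.
by apply: IH => // t st; apply: FF'; rewrite /= st.
Qed.

End IteratedIntegral.

Section MeanFunctional.
Context d (X : measurableType d) (R : realType).
Implicit Types (I : (X -> \bar R) -> \bar R) (J : (X -> R) -> R).

(* [I] extends to nonnegative extended functions the normalized positive
   linear functional [J] on bounded measurable functions, as the integral
   against a probability does. *)
Definition is_mean I J :=
  [/\ positive_monotone I,
      forall f, bounded_measurable f -> I (fun x => (f x)%:E) = (J f)%:E,
      forall f g a b, bounded_measurable f -> bounded_measurable g ->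
        J (fun x => a * f x + b * g x) = a * J f + b * J g
    & forall r, J (fun _ => r) = r].

Lemma integral_is_mean (mu : {measure set X -> \bar R}) : mu setT = 1%E ->
  is_mean (fun F => \int[mu]_x F x)%E (Rintegral mu setT).
Proof.
move=> mu1; split; first split.
- by move=> F F0; exact: integral_ge0.
- exact: le_integral_nonneg.
- by move=> f; exact: integral_bounded_measurable.
- by move=> f g a b; exact: Rintegral_lin.
- exact: Rintegral_const.
Qed.

Variables (I : (X -> \bar R) -> \bar R) (J : (X -> R) -> R).
Hypothesis hI : is_mean I J.

Variable x : X -> R.
Hypothesis bx : bounded_measurable x.

Lemma mean_quadratic a b c :
  I (fun v => (a + b * x v + c * x v ^+ 2)%:E) =
  (a + b * J x + c * J (fun v => x v ^+ 2))%:E.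
Proof.
have [_ IJ Jlin Jcst] := hI.
have bx2 := bounded_measurable_sqr bx.
have bcx := bounded_measurable_lin b c bx bx2.
have -> : (fun v => (a + b * x v + c * x v ^+ 2)%:E) =
          (fun v => (1 * a + 1 * (b * x v + c * x v ^+ 2))%:E).
  by apply: funext => v; congr EFin; ring.
rewrite IJ; last exact: bounded_measurable_lin 1 1 (bounded_measurable_cst _ a) bcx.
rewrite (Jlin (fun _ => a) (fun v => b * x v + c * x v ^+ 2))//;
  last exact: bounded_measurable_cst.
by rewrite Jlin// Jcst; congr EFin; ring.
Qed.

(* The first two moments of the sum of N i.i.d. copies of x. *)
Lemma intN_quadratic N a b c :
  intN N I (fun t => (a + b * \sum_(w <- t) x w + c * (\sum_(w <- t) x w) ^+ 2)%:E) =
  (a + b * (N%:R * J x) +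
   c * (N%:R * J (fun v => x v ^+ 2) + N%:R * (N%:R - 1) * J x ^+ 2))%:E.
Proof.
elim: N a b c => [|N IH] a b c /=; first by rewrite big_nil; congr EFin; ring.
set m1 := J x; set m2 := J (fun v => x v ^+ 2).
have step v : (fun t => (a + b * \sum_(w <- v :: t) x w +
                        c * (\sum_(w <- v :: t) x w) ^+ 2)%:E) =
  (fun t => ((a + b * x v + c * x v ^+ 2) + (b + 2 * c * x v) * \sum_(w <- t) x w
             + c * (\sum_(w <- t) x w) ^+ 2)%:E).
  by apply: funext => t; rewrite big_cons; congr EFin; ring.
have -> : (fun v => intN N I (fun t => (a + b * \sum_(w <- v :: t) x w +
                                      c * (\sum_(w <- v :: t) x w) ^+ 2)%:E)) =
  (fun v => ((a + b * (N%:R * m1) + c * (N%:R * m2 + N%:R * (N%:R - 1) * m1 ^+ 2))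
             + (b + 2 * c * (N%:R * m1)) * x v + c * x v ^+ 2)%:E).
  by apply: funext => v; rewrite step IH -/m1 -/m2; congr EFin; ring.
by rewrite mean_quadratic; congr EFin; rewrite -/m1 -/m2 mulrSr; ring.
Qed.

Lemma mean_sqr_le B : (forall v, `|x v| <= B) -> J (fun v => x v ^+ 2) <= B ^+ 2.
Proof.
have [[_ Ile] IJ _ Jcst] := hI => xB.
have := Ile (fun v => (x v ^+ 2)%:E) (fun=> (B ^+ 2)%:E).
rewrite IJ; last exact: bounded_measurable_sqr.
rewrite (IJ (fun=> B ^+ 2)); last exact: bounded_measurable_cst.
rewrite Jcst lee_fin; apply => v; rewrite lee_fin ?sqr_ge0//.
by rewrite -[X in X <= _]ger0_norm ?sqr_ge0// normrX lerXn2r ?nnegrE// (le_trans _ (xB v)).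
Qed.

(* One step of the martingale argument: the variance of the empirical mean of
   N i.i.d. draws of a function bounded by B is at most B^2 / N. *)
Lemma intN_sq_le N B A kap H : (1 <= N)%N -> (forall v, `|x v| <= B) ->
  (forall t, 0 <= H t)%E ->
  (forall t, size t = N -> H t <= ((A + emp t x) ^+ 2 + kap)%:E)%E ->
  (intN N I H <= ((A + J x) ^+ 2 + kap + B ^+ 2 / N%:R)%:E)%E.
Proof.
move=> N1 xB H0 HA.
have N0 : N%:R != 0 :> R by rewrite pnatr_eq0 -lt0n.
have [hIm _ _ _] := hI.
apply: (le_trans (intN_le hIm (F' := fun t =>
  ((A ^+ 2 + kap) + (2 * A / N%:R) * \sum_(w <- t) x w
   + N%:R^-2 * (\sum_(w <- t) x w) ^+ 2)%:E) H0 _)).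
  move=> t st; apply: le_trans (HA t st) _.
  by rewrite /emp st lee_fin le_eqVlt; apply/orP; left; apply/eqP; field.
rewrite intN_quadratic lee_fin.
set m1 := J x; set m2 := J (fun v => x v ^+ 2).
have -> : A ^+ 2 + kap + 2 * A / N%:R * (N%:R * m1) +
   N%:R^-2 * (N%:R * m2 + N%:R * (N%:R - 1) * m1 ^+ 2) =
   (A + m1) ^+ 2 + kap + (m2 - m1 ^+ 2) / N%:R by field.
rewrite lerD2l ler_pM2r ?invr_gt0 ?ltr0n//.
by apply: le_trans (mean_sqr_le xB); rewrite lerBlDr lerDl sqr_ge0.
Qed.

End MeanFunctional.

Section LipschitzMeasurable.
Context (R : realType) (d : nat).

Definition rat_tuple (m : nat) : d.-tuple R :=
  if (unpickle m : option (d.-tuple rat)) is Some t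
  then map_tuple (fun r : rat => ratr r) t else nseq_tuple d 0.

Lemma measurable_edist (q : d.-tuple R) : measurable_fun setT (fun x => Defs.edist x q).
Proof.
apply: measurableT_comp; first exact: continuous_measurable_fun (@sqrt_continuous R).
apply: measurable_sum => i; rewrite /GRing.exp /=.
by apply: measurable_funM; apply: measurable_funB => //; exact: measurable_tnth.
Qed.

Lemma rat_tuple_dense (x : d.-tuple R) (e : R) : 0 < e ->
  exists m, Defs.edist x (rat_tuple m) <= e.
Proof.
move=> e0; have dp : 0 < d%:R + 1 :> R by rewrite ltr_pwDr// ler0n.
set e' := e / (d%:R + 1); have e'0 : 0 < e' by rewrite divr_gt0.
have hr (i : 'I_d) : exists r : rat, `|tnth x i - ratr r| < e'.
  have [r] := @rat_in_itvoo R (tnth x i - e') (tnth x i + e') ltac:(lra).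
  rewrite in_itv /= => /andP[h1 h2]; exists r.
  by rewrite ltr_norml; apply/andP; split; lra.
have [f hf] := boolp.choice hr.
exists (pickle [tuple f i | i < d]); rewrite /rat_tuple pickleK /Defs.edist.
rewrite -[e]gtr0_norm// -sqrtr_sqr ler_sqrt ?sqr_ge0//.
apply: (@le_trans _ _ (\sum_(i < d) e' ^+ 2)).
  apply: ler_sum => i _; rewrite tnth_map tnth_mktuple.
  by rewrite -real_normK ?num_real// lerXn2r ?nnegrE// ltW.
rewrite sumr_const card_ord /e' expr_div_n -[_ *+ d]mulr_natr.
have -> : e ^+ 2 / (d%:R + 1) ^+ 2 * d%:R = e ^+ 2 * (d%:R / (d%:R + 1) ^+ 2).
  by field; rewrite gt_eqF.
apply: ler_piMr; first exact: sqr_ge0.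
rewrite ler_pdivrMr ?exprn_gt0// mul1r.
by apply: (@le_trans _ _ (d%:R + 1)); [rewrite lerDl | have := ler0n R d; nra].
Qed.

Variables (g : d.-tuple R -> R) (K : R).
Hypothesis K0 : 0 <= K.
Hypothesis g_lip : forall x x', `|g x - g x'| <= K * Defs.edist x x'.

(* McShane's inf-convolution of g over the first k + 1 rational points; it
   decreases to g. *)
Let cone m x := g (rat_tuple m) + K * Defs.edist x (rat_tuple m).

Fixpoint mcshane k x :=
  if k is k'.+1 then Num.min (mcshane k' x) (cone k x) else cone 0 x.

Lemma le_cone x m : g x <= cone m x.
Proof. by rewrite /cone -lerBlDl; apply: le_trans (ler_norm _) (g_lip _ _). Qed.

Lemma le_mcshane x k : g x <= mcshane k x.
Proof. by elim: k => [|k IH] /=; rewrite ?le_min ?IH le_cone. Qed.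

Lemma mcshane_le_cone x m k : (m <= k)%N -> mcshane k x <= cone m x.
Proof.
elim: k => [|k IH]; first by rewrite leqn0 => /eqP ->.
rewrite leq_eqVlt => /orP[/eqP -> /=|]; first by rewrite ge_min lexx orbT.
by rewrite ltnS => /IH /= h; rewrite ge_min h.
Qed.

Lemma measurable_mcshane k : measurable_fun setT (mcshane k).
Proof.
have mcone m : measurable_fun setT (cone m).
  by apply: measurable_funD => //; apply: measurable_funM => //; exact: measurable_edist.
by elim: k => [|k IH] /=; [exact: mcone | exact: measurable_minr].
Qed.

Lemma lipschitz_measurable : measurable_fun setT g.
Proof.
apply: (@measurable_fun_cvg _ _ _ _ mcshane) => //; first exact: measurable_mcshane.
move=> x _; apply/cvgrPdist_le => e e0.
have Kp : 0 < 2 * K + 1 by rewrite ltr_pwDr ?mulr_ge0.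
have [m hm] := rat_tuple_dense x (divr_gt0 e0 Kp).
exists m => // k /= mk.
rewrite distrC ger0_norm ?subr_ge0 ?le_mcshane// lerBlDl.
apply: le_trans (mcshane_le_cone x mk) _; rewrite /cone.
have h1 : g (rat_tuple m) <= g x + K * Defs.edist x (rat_tuple m).
  by rewrite -lerBlDl; apply: le_trans (ler_norm _) _; rewrite distrC g_lip.
have h2 : K * Defs.edist x (rat_tuple m) <= K * (e / (2 * K + 1)) by apply: ler_wpM2l.
have h3 : K * (e / (2 * K + 1)) * 2 <= e.
  have -> : K * (e / (2 * K + 1)) * 2 = e * (2 * K / (2 * K + 1)).
    by field; rewrite gt_eqF.
  by apply: ler_piMr; [exact: ltW | rewrite ler_pdivrMr// mul1r; lra].
lra.
Qed.

End LipschitzMeasurable.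

Lemma measurable_Rintegral_kernel d d' (X : measurableType d) (Y : measurableType d')
    (R : realType) (k : R.-pker X ~> Y) (f : Y -> R) :
  measurable_fun setT f -> (forall y, 0 <= f y) ->
  measurable_fun setT (fun x => Rintegral (k x) setT f).
Proof.
move=> mf f0; apply: measurableT_comp => //.
apply: (measurable_fun_integral_kernel (l := fun x => k x)).
- by move=> A mA; exact: measurable_kernel.
- by move=> y; rewrite lee_fin.
- exact/measurable_EFinP.
Qed.

Section BackwardFunctions.
Context (R : realType) (d : nat).
Local Notation U := (d.-tuple R).
Variables (G : nat -> U -> R) (c : R).
Hypothesis G_meas : forall p, measurable_fun setT (G p).
Hypothesis G_range : forall p u, 0 < G p u <= c.

(* The real-valued version of [hfun]: [hfunR K k p] is h_p for a horizon
   n = p + k. *)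
Fixpoint hfunR (K : nat -> R.-pker U ~> U) (k p : nat) (u : U) : R :=
  if k is k'.+1 then G p u * Rintegral (K p.+1 u) setT (hfunR K k' p.+1) else 1.

Lemma hfunR_measurable_range K k p :
  measurable_fun setT (hfunR K k p) /\ forall u, 0 <= hfunR K k p u <= c ^+ k.
Proof.
elim: k p => [|k IH] p /=; first by split => // u; rewrite expr0 ler01 lexx.
have [mh hb] := IH p.+1.
have bh : bounded_measurable (hfunR K k p.+1).
  by split => //; exists (c ^+ k) => u; have /andP[h0 h1] := hb u; rewrite ger0_norm.
split.
  by apply: measurable_funM => //; apply: measurable_Rintegral_kernel => // u;
    have /andP[] := hb u.
move=> u; have /andP[G0 Gc] := G_range p u.
have I0 : 0 <= Rintegral (K p.+1 u) setT (hfunR K k p.+1).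
  by apply: Rintegral_ge0 => w _; have /andP[] := hb w.
have Ic : Rintegral (K p.+1 u) setT (hfunR K k p.+1) <= c ^+ k.
  apply: Rintegral_le_bound => // [|w]; first exact: prob_kernel.
  by have /andP[] := hb w.
by rewrite mulr_ge0 ?(ltW G0)//= exprS ler_pM// ltW.
Qed.

Lemma hfunR_range K k p u : 0 <= hfunR K k p u <= c ^+ k.
Proof. by have [_ ->] := hfunR_measurable_range K k p. Qed.

Lemma hfunR_bounded_measurable K k p : bounded_measurable (hfunR K k p).
Proof.
have [mh hb] := hfunR_measurable_range K k p; split => //; exists (c ^+ k) => u.
by have /andP[h0 h1] := hb u; rewrite ger0_norm.
Qed.

Lemma hfunE K k p u : hfun G K k p u = (hfunR K k p u)%:E.
Proof.
elim: k p u => [|k IH] p u //=.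
rewrite (eq_fun (IH p.+1)) integral_bounded_measurable//.
  exact: prob_kernel.
exact: hfunR_bounded_measurable.
Qed.

End BackwardFunctions.

Section EmpiricalMean.
Context (T : Type) (R : realType) (s : seq T).

Lemma emp_ge0 (f : T -> R) : (forall v, 0 <= f v) -> 0 <= emp s f.
Proof. by move=> f0; rewrite /emp divr_ge0 ?ler0n// sumr_ge0. Qed.

Lemma emp_lin (f g : T -> R) a b :
  emp s (fun v => a * f v + b * g v) = a * emp s f + b * emp s g.
Proof. by rewrite /emp big_split /= -!mulr_sumr !mulrA -mulrDl. Qed.

Hypothesis s_gt0 : (0 < size s)%N.

Lemma emp_gt0 (f : T -> R) : (forall v, 0 < f v) -> 0 < emp s f.
Proof.
move=> f0; rewrite /emp divr_gt0 ?ltr0n//.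
case: s s_gt0 => // v t _; rewrite big_cons; apply: ltr_pwDl => //.
by rewrite sumr_ge0// => u _; exact: ltW.
Qed.

Lemma emp_cst (r : R) : emp s (fun=> r) = r.
Proof.
rewrite /emp big_const_seq count_predT iter_addr addr0 -[r *+ _]mulr_natr.
by rewrite mulfK// pnatr_eq0 -lt0n.
Qed.

Lemma emp_le (f : T -> R) B : (forall v, f v <= B) -> emp s f <= B.
Proof.
move=> fB; rewrite -(emp_cst B) /emp ler_pM2r ?invr_gt0 ?ltr0n//.
by apply: ler_sum => v _; exact: fB.
Qed.

End EmpiricalMean.

Lemma sumr_lin (R : comPzRingType) (I : Type) (t : seq I) (c f g : I -> R) b b' :
  \sum_(i <- t) c i * (b * f i + b' * g i) =
  b * \sum_(i <- t) c i * f i + b' * \sum_(i <- t) c i * g i.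
Proof. by rewrite !mulr_sumr -big_split; apply: eq_bigr => i _ /=; ring. Qed.

Section Selection.
Context (R : realType) (d : nat).
Local Notation U := (d.-tuple R).
Local Notation V := (d.-tuple R * d.-tuple R)%type.
Variables (Mn : R.-pker V ~> V) (Gp : U -> R) (s : seq V).
Hypothesis Gp_gt0 : forall u, 0 < Gp u.

Let N : R := (size s)%:R.
Let gnorm (proj : V -> U) v := Gp (proj v) / emp s (fun w => Gp (proj w)).
Let gmin v := Num.min (gnorm fst v) (gnorm snd v).
Let mass := emp s gmin.
Let wres (proj : V -> U) v :=
  (gnorm proj v - gmin v) / (N * emp s (fun x => gnorm proj x - gmin x)).

Definition PhiR (f : V -> R) :=
  \sum_(v <- s) (gmin v / N) * Rintegral (Mn v) setT f +
  (if mass == 1 then 0 else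
     (1 - mass) * \sum_(v <- s) \sum_(u <- s)
                 (wres fst v * wres snd u) * Rintegral (Mn (v.1, u.2)) setT f).

Lemma gnorm_ge0 proj v : 0 <= gnorm proj v.
Proof. by apply: divr_ge0; [exact: ltW | apply: emp_ge0 => w; exact: ltW]. Qed.

Lemma gmin_ge0 v : 0 <= gmin v.
Proof. by rewrite le_min !gnorm_ge0. Qed.

Lemma gmin_le_fst v : gmin v <= gnorm fst v.
Proof. by rewrite ge_min lexx. Qed.

Lemma gmin_le_snd v : gmin v <= gnorm snd v.
Proof. by rewrite ge_min lexx orbT. Qed.

Lemma wres_ge0 proj : (forall v, gmin v <= gnorm proj v) -> forall v, 0 <= wres proj v.
Proof.
move=> gmin_le v; rewrite divr_ge0 ?subr_ge0// mulr_ge0 ?ler0n// emp_ge0// => x.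
by rewrite subr_ge0.
Qed.

Lemma sum_gnorm proj : (0 < size s)%N -> \sum_(v <- s) gnorm proj v = N.
Proof.
move=> s_gt0; rewrite -mulr_suml /emp.
have N0 : N != 0 by rewrite pnatr_eq0 -lt0n.
have S0 : \sum_(w <- s) Gp (proj w) != 0.
  rewrite gt_eqF//; case: s s_gt0 {N0} => // v t _; rewrite big_cons ltr_pwDl//.
  by rewrite sumr_ge0// => w _; exact: ltW.
by rewrite /N; field; rewrite S0 -/N N0.
Qed.

Lemma mass_le1 : mass <= 1.
Proof.
have [s0|s_gt0] := posnP (size s).
  by move/size0nil: s0 => s0; rewrite /mass /emp s0 big_nil mul0r ler01.
rewrite /emp ler_pdivrMr ?ltr0n// mul1r -/N -(sum_gnorm fst s_gt0).
by apply: ler_sum => v _; exact: gmin_le_fst.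
Qed.

Lemma PhiInt_ge0 F : (forall v, 0 <= F v)%E -> (0 <= PhiInt Mn Gp s F)%E.
Proof.
move=> F0; rewrite /PhiInt /=; apply: adde_ge0.
  apply: sume_ge0 => v _; apply: mule_ge0; last exact: integral_ge0.
  by rewrite lee_fin divr_ge0 ?ler0n// gmin_ge0.
case: ifP => _ //; apply: mule_ge0; first by rewrite lee_fin subr_ge0 mass_le1.
apply: sume_ge0 => v _; apply: sume_ge0 => u _; apply: mule_ge0; last exact: integral_ge0.
by rewrite lee_fin mulr_ge0// wres_ge0// => x; [exact: gmin_le_fst | exact: gmin_le_snd].
Qed.

Lemma PhiInt_le F F' : (forall v, 0 <= F v)%E -> (forall v, F v <= F' v)%E ->
  (PhiInt Mn Gp s F <= PhiInt Mn Gp s F')%E.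
Proof.
move=> F0 FF'; rewrite /PhiInt /=.
have iF v : (\int[Mn v]_z F z <= \int[Mn v]_z F' z)%E by exact: le_integral_nonneg.
have w0 v u : 0 <= wres fst v * wres snd u.
  by rewrite mulr_ge0// wres_ge0// => x; [exact: gmin_le_fst | exact: gmin_le_snd].
apply: leeD.
  apply: lee_sum => v _; apply: lee_pmul => //; last exact: integral_ge0.
  by rewrite lee_fin divr_ge0 ?ler0n// gmin_ge0.
case: ifP => _ //; apply: lee_pmul => //.
- by rewrite lee_fin subr_ge0 mass_le1.
- by apply: sume_ge0 => v _; apply: sume_ge0 => u _; apply: mule_ge0;
    [rewrite lee_fin; exact: w0 | exact: integral_ge0].
apply: lee_sum => v _; apply: lee_sum => u _.
by apply: lee_pmul => //; [rewrite lee_fin; exact: w0 | exact: integral_ge0].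
Qed.

Lemma PhiInt_positive_monotone : positive_monotone (PhiInt Mn Gp s).
Proof. by split; [exact: PhiInt_ge0 | exact: PhiInt_le]. Qed.

Lemma PhiInt_EFin f : bounded_measurable f ->
  PhiInt Mn Gp s (fun v => (f v)%:E) = (PhiR f)%:E.
Proof.
move=> bf; have IE v := integral_bounded_measurable (@prob_kernel _ _ _ _ _ Mn v) bf.
rewrite /PhiInt /PhiR /=.
under eq_bigr => v _ do rewrite IE -EFinM.
rewrite sumEFin EFinD; f_equal.
case: ifP => _ //.
under eq_bigr => v _ do under eq_bigr => u _ do rewrite IE -EFinM.
under eq_bigr => v _ do rewrite sumEFin.
by rewrite sumEFin -EFinM.
Qed.

Lemma PhiR_lin f f' b b' : bounded_measurable f -> bounded_measurable f' ->
  PhiR (fun x => b * f x + b' * f' x) = b * PhiR f + b' * PhiR f'.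
Proof.
move=> bf bf'.
have IL v : Rintegral (Mn v) setT (fun x => b * f x + b' * f' x) =
            b * Rintegral (Mn v) setT f + b' * Rintegral (Mn v) setT f'.
  by apply: (Rintegral_lin (@prob_kernel _ _ _ _ _ Mn v)).
rewrite /PhiR; under eq_bigr => v _ do rewrite IL.
rewrite sumr_lin; case: ifP => _; first by ring.
have E v : \sum_(u <- s) wres fst v * wres snd u *
             Rintegral (Mn (v.1, u.2)) setT (fun x => b * f x + b' * f' x) =
  b * \sum_(u <- s) wres fst v * wres snd u * Rintegral (Mn (v.1, u.2)) setT f +
  b' * \sum_(u <- s) wres fst v * wres snd u * Rintegral (Mn (v.1, u.2)) setT f'.
  by under eq_bigr => u _ do rewrite IL; exact: sumr_lin.
by rewrite (eq_bigr _ (fun v _ => E v)) big_split /= -!mulr_sumr; ring.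
Qed.

Hypothesis s_gt0 : (0 < size s)%N.

Let N_neq0 : N != 0. Proof. by rewrite pnatr_eq0 -lt0n. Qed.

Lemma sum_gmin : \sum_(v <- s) gmin v = N * mass.
Proof. by rewrite /mass /emp -/N mulrC mulfVK. Qed.

Lemma sum_gnorm_sub_gmin proj : \sum_(v <- s) (gnorm proj v - gmin v) = N * (1 - mass).
Proof. by rewrite sumrB sum_gnorm// sum_gmin; ring. Qed.

Lemma sum_wres proj : mass != 1 -> \sum_(v <- s) wres proj v = 1.
Proof.
move=> hmass; have hmass' : 1 - mass != 0 by rewrite subr_eq0 eq_sym.
by rewrite -mulr_suml /emp -/N !sum_gnorm_sub_gmin; field; rewrite hmass' N_neq0.
Qed.

Lemma wres_scale proj v : mass != 1 -> (1 - mass) * wres proj v = (gnorm proj v - gmin v) / N.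
Proof.
move=> hmass; have hmass' : 1 - mass != 0 by rewrite subr_eq0 eq_sym.
by rewrite /wres /emp -/N sum_gnorm_sub_gmin; field; rewrite hmass' N_neq0.
Qed.

Lemma gmin_eq proj v : (forall v, gmin v <= gnorm proj v) -> mass = 1 -> v \in s ->
  gmin v = gnorm proj v.
Proof.
move=> gmin_le hmass vs; apply/eqP; rewrite eq_sym -subr_eq0.
have : \sum_(v <- s) (gnorm proj v - gmin v) == 0.
  by rewrite sum_gnorm_sub_gmin hmass subrr mulr0.
by rewrite psumr_eq0 => [/allP/(_ v vs)//|u _]; rewrite subr_ge0.
Qed.

Lemma PhiR_cst r : PhiR (fun=> r) = r.
Proof.
have Ir v := Rintegral_const (@prob_kernel _ _ _ _ _ Mn v) r.
rewrite /PhiR; under eq_bigr => v _ do rewrite Ir.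
rewrite -mulr_suml -mulr_suml sum_gmin [N * mass]mulrC mulfK//.
case: ifPn => [/eqP ->|hmass]; first by rewrite addr0 mul1r.
have E v : \sum_(u <- s) wres fst v * wres snd u * Rintegral (Mn (v.1, u.2)) setT (fun=> r) =
  wres fst v * r.
  by under eq_bigr => u _ do rewrite Ir; rewrite -mulr_suml -mulr_sumr sum_wres// mulr1.
by rewrite (eq_bigr _ (fun v _ => E v)) -mulr_suml sum_wres//; ring.
Qed.

Lemma PhiInt_is_mean : is_mean (PhiInt Mn Gp s) PhiR.
Proof.
split; [exact: PhiInt_positive_monotone | exact: PhiInt_EFin |
        exact: PhiR_lin | exact: PhiR_cst].
Qed.

Variables (K1 K2 : R.-pker U ~> U).
Hypothesis marg_fst : forall v (y : U -> R), bounded_measurable y ->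
  (\int[Mn v]_z (y z.1)%:E = \int[K1 v.1]_u (y u)%:E)%E.
Hypothesis marg_snd : forall v (y : U -> R), bounded_measurable y ->
  (\int[Mn v]_z (y z.2)%:E = \int[K2 v.2]_u (y u)%:E)%E.

(* The first marginal of bar Phi(mu) is the Feynman-Kac update of mu_1. *)
Lemma PhiR_fst y : bounded_measurable y ->
  PhiR (fun z => y z.1) = \sum_(v <- s) gnorm fst v / N * Rintegral (K1 v.1) setT y.
Proof.
move=> by_; rewrite /PhiR.
have E v : Rintegral (Mn v) setT (fun z => y z.1) = Rintegral (K1 v.1) setT y.
  by rewrite /Rintegral marg_fst.
under eq_bigr => v _ do rewrite E.
case: ifPn => [/eqP hmass|hmass].
  by rewrite addr0; apply: eq_big_seq => v vs; rewrite (gmin_eq gmin_le_fst).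
have E2 v : \sum_(u <- s) wres fst v * wres snd u *
               Rintegral (Mn (v.1, u.2)) setT (fun z => y z.1) =
    wres fst v * Rintegral (K1 v.1) setT y.
  under eq_bigr => u _ do rewrite E.
  by rewrite -[RHS]mulr1 -(sum_wres snd hmass) !mulr_sumr; apply: eq_bigr => u _ /=; ring.
rewrite (eq_bigr _ (fun v _ => E2 v)) mulr_sumr -big_split /=; apply: eq_bigr => v _.
by rewrite mulrA wres_scale//; ring.
Qed.

Lemma PhiR_snd y : bounded_measurable y ->
  PhiR (fun z => y z.2) = \sum_(v <- s) gnorm snd v / N * Rintegral (K2 v.2) setT y.
Proof.
move=> by_; rewrite /PhiR.
have E v : Rintegral (Mn v) setT (fun z => y z.2) = Rintegral (K2 v.2) setT y.
  by rewrite /Rintegral marg_snd.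
under eq_bigr => v _ do rewrite E.
case: ifPn => [/eqP hmass|hmass].
  by rewrite addr0; apply: eq_big_seq => v vs; rewrite (gmin_eq gmin_le_snd).
have E2 v : \sum_(u <- s) wres fst v * wres snd u *
               Rintegral (Mn (v.1, u.2)) setT (fun z => y z.2) =
    wres fst v * \sum_(u <- s) wres snd u * Rintegral (K2 u.2) setT y.
  by under eq_bigr => u _ do rewrite E; rewrite mulr_sumr; apply: eq_bigr => u _ /=; ring.
rewrite (eq_bigr _ (fun v _ => E2 v)) -mulr_suml sum_wres// mul1r mulr_sumr -big_split /=.
by apply: eq_bigr => v _; rewrite mulrA wres_scale//; ring.
Qed.

Lemma emp_mul_sum_gnorm proj (r : V -> R) :
  emp s (fun v => Gp (proj v)) * \sum_(v <- s) gnorm proj v / N * r v =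
  emp s (fun v => Gp (proj v) * r v).
Proof.
have E0 : emp s (fun v => Gp (proj v)) != 0 by rewrite gt_eqF// emp_gt0.
rewrite mulr_sumr {2}/emp -/N mulr_suml; apply: eq_bigr => v _.
by rewrite /gnorm; field; rewrite ?E0 ?N_neq0.
Qed.

Lemma emp_PhiR_fst y : bounded_measurable y ->
  emp s (fun v => Gp v.1) * PhiR (fun z => y z.1) =
  emp s (fun v => Gp v.1 * Rintegral (K1 v.1) setT y).
Proof.
by move=> by_; rewrite PhiR_fst// (emp_mul_sum_gnorm fst (fun v => Rintegral (K1 v.1) setT y)).
Qed.

Lemma emp_PhiR_snd y : bounded_measurable y ->
  emp s (fun v => Gp v.2) * PhiR (fun z => y z.2) =
  emp s (fun v => Gp v.2 * Rintegral (K2 v.2) setT y).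
Proof.
by move=> by_; rewrite PhiR_snd// (emp_mul_sum_gnorm snd (fun v => Rintegral (K2 v.2) setT y)).
Qed.

End Selection.

Section ParticleSystem.
Context (R : realType) (d : nat).
Local Notation U := (d.-tuple R).
Local Notation V := (d.-tuple R * d.-tuple R)%type.
Variables (G : nat -> U -> R) (c : R).
Hypothesis G_meas : forall p, measurable_fun setT (G p).
Hypothesis G_range : forall p u, 0 < G p u <= c.
Variables (M : nat -> R.-pker V ~> V) (K1 K2 : nat -> R.-pker U ~> U).
Hypothesis marg_fst : forall p v (y : U -> R), bounded_measurable y ->
  (\int[M p.+1 v]_z (y z.1)%:E = \int[K1 p.+1 v.1]_u (y u)%:E)%E.
Hypothesis marg_snd : forall p v (y : U -> R), bounded_measurable y ->
  (\int[M p.+1 v]_z (y z.2)%:E = \int[K2 p.+1 v.2]_u (y u)%:E)%E.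
Variable N : nat.

Let G_gt0 p u : 0 < G p u. Proof. by have /andP[] := G_range p u. Qed.

Let hfun_bm K k p (proj : V -> U) : measurable_fun setT proj ->
  bounded_measurable (fun v => hfunR G K k p (proj v)).
Proof. by move=> mproj; exact/bounded_measurable_comp/hfunR_bounded_measurable. Qed.

Let hfun_norm_le K k p u a : `|a| <= 1 -> `|a * hfunR G K k p u| <= c ^+ k.
Proof.
move=> a1; have /andP[h0 hc] := hfunR_range G_meas G_range K k p u.
by rewrite normrM (ger0_norm h0) -[leRHS]mul1r ler_pM.
Qed.

Let weighted_hfun_le K k p u a c' q : `|a| <= 1 -> 0 <= c' <= c ^+ q ->
  `|a * c' * hfunR G K k p u| <= c ^+ (q + k).
Proof.
move=> a1 /andP[c'0 c'q]; rewrite mulrAC normrM (ger0_norm c'0) exprD mulrC.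
by apply: ler_pM => //; exact: hfun_norm_le.
Qed.

Lemma chain_ge0 k p s c1 c2 (F : R -> R -> \bar R) : (forall x y, 0 <= F x y)%E ->
  (0 <= chain G M N k p s c1 c2 F)%E.
Proof.
elim: k p s c1 c2 => [|k IH] p s c1 c2 F0 /=; first exact: F0.
by apply: intN_ge0 => [|t]; [exact: PhiInt_positive_monotone | exact: IH].
Qed.

Lemma chain_le k p s c1 c2 (F F' : R -> R -> \bar R) : (forall x y, 0 <= F x y)%E ->
  (forall x y, F x y <= F' x y)%E ->
  (chain G M N k p s c1 c2 F <= chain G M N k p s c1 c2 F')%E.
Proof.
elim: k p s c1 c2 => [|k IH] p s c1 c2 F0 FF' /=; first exact: FF'.
apply: intN_le => [|t|t _]; first exact: PhiInt_positive_monotone.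
  exact: chain_ge0.
exact: IH.
Qed.

Lemma levelE_ge0 eta0 n (F : R -> R -> \bar R) : (forall x y, 0 <= F x y)%E ->
  (0 <= levelE G eta0 M N n F)%E.
Proof.
move=> F0; apply: intN_ge0 => [|t]; last exact: chain_ge0.
by have [[]] := integral_is_mean (probability_setT eta0).
Qed.

Lemma levelE_le eta0 n (F F' : R -> R -> \bar R) : (forall x y, 0 <= F x y)%E ->
  (forall x y, F x y <= F' x y)%E ->
  (levelE G eta0 M N n F <= levelE G eta0 M N n F')%E.
Proof.
move=> F0 FF'; apply: intN_le => [|t|t _]; last exact: chain_le.
  by have [] := integral_is_mean (probability_setT eta0).
exact: chain_ge0.
Qed.

(* gamma^N_p(1) eta^N_p(h_p) for one marginal, at time p and horizon p + k,
   where [gam] stands for gamma^N_p(1). *)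
Definition fk_estimate K (proj : V -> U) k p (s : seq V) gam :=
  gam * emp s (fun v => hfunR G K k p (proj v)).

Hypothesis N_gt0 : (0 < N)%N.

(* One transition preserves the conditional mean of the estimates. *)
Lemma PhiR_fk_estimate k p s c1 c2 a1 a2 : size s = N ->
  PhiR (M p.+1) (G p) s (fun v =>
      a1 * (c1 * emp s (fun w => G p w.1)) * hfunR G K1 k p.+1 v.1 +
      a2 * (c2 * emp s (fun w => G p w.2)) * hfunR G K2 k p.+1 v.2) =
  a1 * fk_estimate K1 fst k.+1 p s c1 + a2 * fk_estimate K2 snd k.+1 p s c2.
Proof.
move=> sN; have s_gt0 : (0 < size s)%N by rewrite sN.
rewrite PhiR_lin; try exact: hfun_bm.
rewrite /fk_estimate /= -(emp_PhiR_fst (G_gt0 p) s_gt0 (marg_fst p));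
  last exact: hfunR_bounded_measurable.
rewrite -(emp_PhiR_snd (G_gt0 p) s_gt0 (marg_snd p)); last exact: hfunR_bounded_measurable.
by ring.
Qed.

Lemma chain_bound k : forall p s c1 c2 A kap a1 a2,
  0 <= kap -> size s = N -> 0 <= c1 <= c ^+ p -> 0 <= c2 <= c ^+ p ->
  `|a1| <= 1 -> `|a2| <= 1 ->
  (chain G M N k p s c1 c2 (fun x y => ((A + a1 * x + a2 * y) ^+ 2 + kap)%:E) <=
   ((A + a1 * fk_estimate K1 fst k p s c1 + a2 * fk_estimate K2 snd k p s c2) ^+ 2
    + kap + k%:R * (2 * c ^+ (p + k)) ^+ 2 / N%:R)%:E)%E.
Proof.
elim: k => [|k IH] p s c1 c2 A kap a1 a2 kap0 sN c1p c2p a1_le1 a2_le1.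
  by rewrite /= /fk_estimate /= !emp_cst ?sN// !mulr1 !mul0r addr0.
have s_gt0 : (0 < size s)%N by rewrite sN.
have next_range q c' (E : R) : 0 <= c' <= c ^+ q -> 0 < E <= c -> 0 <= c' * E <= c ^+ q.+1.
  move=> /andP[c'0 c'q] /andP[E0 Ec].
  by rewrite mulr_ge0 ?(ltW E0)//= exprSr ler_pM// ltW.
have E_range j : 0 < emp s (fun v => G p (j v)) <= c.
  by rewrite emp_gt0//= emp_le// => v; have /andP[] := G_range p (j v).
rewrite /=.
set c1' := c1 * _; set c2' := c2 * _.
have c1'p : 0 <= c1' <= c ^+ p.+1 by exact: next_range (E_range fst).
have c2'p : 0 <= c2' <= c ^+ p.+1 by exact: next_range (E_range snd).
set B := 2 * c ^+ (p + k.+1).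
pose x v := a1 * c1' * hfunR G K1 k p.+1 v.1 + a2 * c2' * hfunR G K2 k p.+1 v.2.
have bx : bounded_measurable x by apply: bounded_measurable_lin; exact: hfun_bm.
have xB v : `|x v| <= B.
  rewrite /B -addSnnS mulr2n mulrDl mul1r; apply: le_trans (ler_normD _ _) _.
  by apply: lerD; exact: weighted_hfun_le.
apply: le_trans (intN_sq_le (PhiInt_is_mean (M p.+1) (G_gt0 p) s_gt0) bx N_gt0 xB
                  (A := A) (kap := kap + k%:R * B ^+ 2 / N%:R) _ _) _.
- by move=> t; apply: chain_ge0 => y z; rewrite lee_fin addr_ge0 ?sqr_ge0.
- move=> t st; apply: le_trans (IH p.+1 t c1' c2' A kap a1 a2 _ _ _ _ _ _) _ => //.
  rewrite /fk_estimate /x emp_lin addSnnS -/B lee_fin addrA.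
  by rewrite le_eqVlt; apply/orP; left; apply/eqP; ring.
rewrite /x PhiR_fk_estimate// lee_fin -natr1.
by rewrite le_eqVlt; apply/orP; left; apply/eqP; ring.
Qed.

Lemma gamma1E (eta0 : probability V R) K (proj : V -> U) n :
  gamma1 G eta0 proj K n = Rintegral eta0 setT (fun v => hfunR G K n 0 (proj v)).
Proof. by rewrite /gamma1; congr fine; apply: eq_integral => v _; exact: hfunE. Qed.

Lemma levelE_bound (eta0 : probability V R) n A kap a1 a2 :
  0 <= kap -> `|a1| <= 1 -> `|a2| <= 1 ->
  (levelE G eta0 M N n (fun x y => ((A + a1 * x + a2 * y) ^+ 2 + kap)%:E) <=
   ((A + a1 * gamma1 G eta0 fst K1 n + a2 * gamma1 G eta0 snd K2 n) ^+ 2 + kap +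
    n.+1%:R * (2 * c ^+ n) ^+ 2 / N%:R)%:E)%E.
Proof.
move=> kap0 a1_le1 a2_le1.
have eta0_mean := integral_is_mean (probability_setT eta0).
set B := 2 * c ^+ n.
pose x v := a1 * 1 * hfunR G K1 n 0 v.1 + a2 * 1 * hfunR G K2 n 0 v.2.
have one_range : (0 : R) <= 1 <= c ^+ 0 by rewrite expr0 ler01 lexx.
have bx : bounded_measurable x by apply: bounded_measurable_lin; exact: hfun_bm.
have xB v : `|x v| <= B.
  rewrite /B mulr2n mulrDl mul1r -[n]add0n; apply: le_trans (ler_normD _ _) _.
  by apply: lerD; exact: weighted_hfun_le.
apply: le_trans (intN_sq_le eta0_mean bx N_gt0 xB
                  (A := A) (kap := kap + n%:R * B ^+ 2 / N%:R) _ _) _.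
- by move=> t; apply: chain_ge0 => y z; rewrite lee_fin addr_ge0 ?sqr_ge0.
- move=> t st; apply: le_trans (@chain_bound n 0 t 1 1 A kap a1 a2 _ _ _ _ _ _) _ => //.
  rewrite /fk_estimate /x emp_lin add0n -/B lee_fin addrA.
  by rewrite le_eqVlt; apply/orP; left; apply/eqP; ring.
have -> : Rintegral eta0 setT x =
    a1 * gamma1 G eta0 fst K1 n + a2 * gamma1 G eta0 snd K2 n.
  rewrite !gamma1E (Rintegral_lin (probability_setT eta0)) ?mulr1//; exact: hfun_bm.
rewrite lee_fin -natr1 le_eqVlt; apply/orP; left; apply/eqP; ring.
Qed.

Lemma levelE_ldiff_bound (eta0 : probability V R) n l A kap : 0 <= kap ->
  (levelE G eta0 M N n (fun x y => ((A + ldiff l x y) ^+ 2 + kap)%:E) <=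
   ((A + ldiff l (gamma1 G eta0 fst K1 n) (gamma1 G eta0 snd K2 n)) ^+ 2 + kap +
    n.+1%:R * (2 * c ^+ n) ^+ 2 / N%:R)%:E)%E.
Proof.
move=> kap0; pose a2 : R := if l == 0%N then 0 else -1.
have ldiffE x y : ldiff l x y = 1 * x + a2 * y.
  by rewrite /ldiff /a2; case: (l == 0%N); ring.
under [X in levelE _ _ _ _ _ X]eq_fun => x do under eq_fun => y do rewrite ldiffE addrA.
rewrite ldiffE addrA; apply: levelE_bound; rewrite ?normr1 // /a2.
by case: (l == 0%N); rewrite ?normr0 ?normrN ?normr1.
Qed.

End ParticleSystem.

Section IndependentLevels.
Context (R : realType) (LE : nat -> (R -> R -> \bar R) -> \bar R).
Hypothesis LE_ge0 : forall l F, (forall x y, 0 <= F x y)%E -> (0 <= LE l F)%E.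
Hypothesis LE_le : forall l F F', (forall x y, 0 <= F x y)%E ->
  (forall x y, F x y <= F' x y)%E -> (LE l F <= LE l F')%E.

Lemma levelsE_le m (F F' : (nat -> R) -> \bar R) : (forall D, 0 <= F D)%E ->
  (forall D, F D <= F' D)%E -> (levelsE m LE F <= levelsE m LE F')%E.
Proof.
elim: m F F' => [|m IH] F F' F0 FF' /=; first exact: FF'.
by apply: IH => D; [apply: LE_ge0 | apply: LE_le].
Qed.

Variables (gam b : nat -> R).
Hypothesis b_ge0 : forall l, 0 <= b l.

(* Squared errors of independent levels add up. *)
Lemma levelsE_sq_le m :
  (forall l, (l < m)%N -> forall A kap, 0 <= kap ->
     (LE l (fun x y => ((A + ldiff l x y) ^+ 2 + kap)%:E) <=
      ((A + gam l) ^+ 2 + kap + b l)%:E)%E) ->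
  forall A kap, 0 <= kap ->
  (levelsE m LE (fun D => ((A + \sum_(l < m) D l) ^+ 2 + kap)%:E) <=
   ((A + \sum_(l < m) gam l) ^+ 2 + kap + \sum_(l < m) b l)%:E)%E.
Proof.
elim: m => [|m IH] hLE A kap kap0; first by rewrite /= !big_ord0 !addr0.
rewrite [levelsE _ _ _]/=.
apply: le_trans (@levelsE_le m _
  (fun D => ((A + gam m + \sum_(l < m) D l) ^+ 2 + (kap + b m))%:E) _ _) _.
- by move=> D; apply: LE_ge0 => x y; rewrite lee_fin addr_ge0 ?sqr_ge0.
- move=> D.
  apply: le_trans (@LE_le m _ (fun x y =>
    ((A + \sum_(l < m) D l + ldiff m x y) ^+ 2 + kap)%:E) _ _) _.
  + by move=> x y; rewrite lee_fin addr_ge0 ?sqr_ge0.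
  + move=> x y; rewrite big_ord_recr /= eqxx addrA lee_fin le_eqVlt; apply/orP; left.
    by apply/eqP; congr ((_ + _ + _) ^+ 2 + _); apply: eq_bigr => i _; rewrite ltn_eqF.
  apply: le_trans (hLE m (ltnSn m) (A + \sum_(l < m) D l) kap kap0) _.
  by rewrite lee_fin le_eqVlt; apply/orP; left; apply/eqP; ring.
apply: le_trans (IH _ (A + gam m) (kap + b m) _) _.
- by move=> l lm; apply: hLE; exact: ltnW.
- exact: addr_ge0.
rewrite !big_ord_recr /= lee_fin le_eqVlt; apply/orP; left; apply/eqP; ring.
Qed.

End IndependentLevels.

Lemma A1_measurable_range (R : realType) (d : nat) (G : nat -> d.-tuple R -> R) :
  A1 G -> exists c : R,
    (forall p, measurable_fun setT (G p)) /\ forall p u, 0 < G p u <= c.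
Proof.
move=> [c [C [c_gt1 [C_gt0 hG]]]]; exists c; split => [p|p u].
  by apply: (lipschitz_measurable (ltW C_gt0)) => x x'; exact: (hG p x x').2.
have /andP[cG Gc] := (hG p u u).1.
by rewrite (ltW Gc) andbT (lt_trans _ cG)// invr_gt0 (lt_trans ltr01).
Qed.

Lemma marginal_kernels_bounded (R : realType) (d : nat)
    (M : nat -> R.-pker (d.-tuple R * d.-tuple R)%type ~> (d.-tuple R * d.-tuple R)%type)
    (proj : d.-tuple R * d.-tuple R -> d.-tuple R)
    (K : nat -> R.-pker (d.-tuple R) ~> (d.-tuple R)) :
  marginal_kernels M proj K -> forall p v (y : d.-tuple R -> R), bounded_measurable y ->
  (\int[M p.+1 v]_z (y (proj z))%:E = \int[K p.+1 (proj v)]_u (y u)%:E)%E.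
Proof. by move=> mk p v y [my [b hb]]; apply: mk => //; exists b. Qed.

Unset Implicit Arguments.

Theorem mainTheorem1 (R : realType) (d : nat) (G : nat -> d.-tuple R -> R)
  (eta0 : nat -> probability (d.-tuple R * d.-tuple R)%type R)
  (M : nat -> nat -> R.-pker (d.-tuple R * d.-tuple R)%type ~> (d.-tuple R * d.-tuple R)%type)
  (M1 M2 : nat -> nat -> R.-pker (d.-tuple R) ~> (d.-tuple R))
  (n L : nat) :
  (1 <= n)%N -> (1 <= L)%N ->
  A1 G ->
  (forall l : nat, (l <= L)%N ->
     marginal_kernels (M l) fst (M1 l) /\ marginal_kernels (M l) snd (M2 l) /\
     A2 (M1 l) /\ A2 (M2 l)) ->
  exists B : nat -> R,
    forall N : nat -> nat, (forall l : nat, (l <= L)%N -> (1 <= N l)%N) ->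
      (levelsE L.+1 (fun l => levelE G (eta0 l) (M l) (N l) n)
         (fun D => ((\sum_(l < L.+1) D l
                     - \sum_(l < L.+1) ldiff l (gamma1 G (eta0 l) fst (M1 l) n)
                                              (gamma1 G (eta0 l) snd (M2 l) n)) ^+ 2)%:E)
       <= (\sum_(l < L.+1) B l / (N l)%:R)%:E)%E.
Proof.
move=> _ _ /A1_measurable_range [c [G_meas G_range]] hlev.
pose B := n.+1%:R * (2 * c ^+ n) ^+ 2.
exists (fun=> B) => N N_gt0.
pose gam l := ldiff l (gamma1 G (eta0 l) fst (M1 l) n) (gamma1 G (eta0 l) snd (M2 l) n).
have -> : (fun D : nat -> R => ((\sum_(l < L.+1) D l - \sum_(l < L.+1) gam l) ^+ 2)%:E) =
          (fun D => ((- \sum_(l < L.+1) gam l + \sum_(l < L.+1) D l) ^+ 2 + 0)%:E).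
  by apply: funext => D; rewrite addr0 addrC.
apply: le_trans (@levelsE_sq_le R (fun l => levelE G (eta0 l) (M l) (N l) n) _ _
  gam (fun l => B / (N l)%:R) _ L.+1 _ (- \sum_(l < L.+1) gam l) 0 (lexx 0)) _.
- by move=> l F F0; exact: levelE_ge0.
- by move=> l F F' F0 FF'; exact: levelE_le.
- by move=> l; rewrite divr_ge0 ?ler0n // mulr_ge0 ?ler0n ?sqr_ge0.
- move=> l /[!ltnS] lL A kap kap0; have [mk1 [mk2 _]] := hlev l lL.
  exact: (levelE_ldiff_bound G_meas G_range (marginal_kernels_bounded mk1)
    (marginal_kernels_bounded mk2) (N_gt0 l lL)).
by rewrite addNr expr0n /= !add0r.
Qed.
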